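(* Let $D=0.5$, let $p_0,p_1,p_2,\dots$ be the PWM basis functions defined in the context, and let $$g(\tau)=\begin{cases}1, & 0\le\tau<0.25,\\ 0, & 0.25\le\tau<0.75,\\ -1, & 0.75\le\tau\le1.\end{cases}$$ Then (i) $\int_0^1 p_k(\tau)\,g(\tau)\,d\tau=0$ for $k=0$ and for every odd $k\ge1$; and (ii) there is a constant $c>0$ such that for every $N_p\in\mathbb N$, the $L^2([0,1])$-orthogonal projection $g_h$ of $g$ onto $\mathrm{span}\{p_0,\dots,p_{N_p}\}$ satisfies $\|g-g_h\|_{L^2([0,1])}\ge c$. In particular, the PWM basis functions with $D=0.5$ do not span a dense subspace of $L^2([0,1])$.
   Context: The PWM basis functions with duty cycle $D\in(0,1)$ are functions of the relative time $\tau\in[0,1]$, defined recursively as follows. Set $p_0(\tau)=1$ on $[0,1]$, and $$p_1(\tau)=\begin{cases}\sqrt3\,\dfrac{2\tau-D}{D}, & 0\le\tau\le D,\\[2mm] \sqrt3\,\dfrac{1+D-2\tau}{1-D}, & D\le\tau\le 1.\end{cases}$$ For $k\ge2$, define $p_k^\star(\tau)=\int_D^\tau p_{k-1}(\tau')\,d\tau'$, then $$\overline p_k(\tau)=p_k^\star(\tau)-\sum_{l=0}^{k-1}p_l(\tau)\int_0^1 p_l(s)\,p_k^\star(s)\,ds,\qquad p_k(\tau)=\frac{\overline p_k(\tau)}{\left(\int_0^1\overline p_k(s)^2\,ds\right)^{1/2}}.$$ *)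

From Stdlib Require Import Reals Lra Lia List ClassicalEpsilon.
Import ListNotations.
Open Scope R_scope.

(* Total (signed, oriented) Riemann integral: the value of RiemannInt when
   f is Riemann integrable on [a,b] (with Stdlib's orientation convention
   when b < a); an unspecified value otherwise.  RiemannInt does not depend
   on the integrability proof (RiemannInt_P5), so this is well defined. *)
Definition integral (f : R -> R) (a b : R) : R :=
  epsilon (inhabits 0)
    (fun I => exists pr : Riemann_integrable f a b, RiemannInt pr = I).

Definition L2inner (f h : R -> R) : R := integral (fun s => f s * h s) 0 1.
Definition L2norm (f : R -> R) : R := sqrt (integral (fun s => f s ^ 2) 0 1).

Definition pwm_p0 : R -> R := fun _ => 1.

Definition pwm_p1 (D : R) : R -> R := fun t =>
  if Rle_dec t D then sqrt 3 * (2 * t - D) / D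
  else sqrt 3 * (1 + D - 2 * t) / (1 - D).

Definition pwm_next (D : R) (prev : list (R -> R)) : R -> R :=
  let plast := last prev pwm_p0 in
  let pstar := fun t => integral plast D t in
  let pbar := fun t =>
    pstar t - fold_right (fun pl acc => acc + pl t * L2inner pl pstar) 0 prev in
  fun t => pbar t / sqrt (integral (fun s => pbar s ^ 2) 0 1).

Fixpoint pwm_list (D : R) (n : nat) : list (R -> R) :=
  match n with
  | O => [pwm_p0]
  | S O => [pwm_p0; pwm_p1 D]
  | S (S k as m) => pwm_list D m ++ [pwm_next D (pwm_list D m)]
  end.

Definition pwm (D : R) (k : nat) : R -> R := nth k (pwm_list D k) pwm_p0.

Definition gtest (t : R) : R :=
  if Rlt_dec t (1/4) then 1 else if Rlt_dec t (3/4) then 0 else -1.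

Definition pwm_comb (D : R) (N : nat) (a : nat -> R) : R -> R :=
  fun t => sum_f_R0 (fun l => a l * pwm D l t) N.

Definition is_L2_projection (D : R) (N : nat) (f gh : R -> R) : Prop :=
  (exists a : nat -> R, forall t, 0 <= t <= 1 -> gh t = pwm_comb D N a t) /\
  (forall l, (l <= N)%nat -> L2inner (fun t => f t - gh t) (pwm D l) = 0).

From Stdlib Require Import Reals Lra Lia List ClassicalEpsilon FunctionalExtensionality.
From Coquelicot Require Import Coquelicot.
Import ListNotations.
Open Scope R_scope.

(* For D = 1/2 every p_k with k >= 1 has one of two mirror symmetries: even about
   t = 1/2 and odd about t = 1/4 on [0,1/2], or odd about 1/2 and even about 1/4.
   Integrating from 1/2 swaps the two kinds up to an additive constant, the
   p_0-component of Gram-Schmidt removes that constant, and the projections onto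
   earlier p_l of the other kind vanish; so p_k has the first symmetry for odd k and
   the second for even k >= 2.  Since g is odd about 1/2, the first symmetry gives (i).
   Both symmetries and the constants are orthogonal to the square wave w equal to
   1, -1, 1, -1 on the four quarters of [0,1]; as <g, w> = 1/2 and ||w|| = 1, every
   combination S of the p_k has ||g - S|| >= <g - S, w> = 1/2. *)

Ltac solve_continuity :=
  repeat first
    [ assumption
    | apply continuity_plus | apply continuity_minus | apply continuity_mult
    | apply continuity_opp
    | apply continuity_const; intros ? ?; reflexivity
    | exact (derivable_continuous _ derivable_id) ].

Lemma integral_RInt (f : R -> R) a b : ex_RInt f a b -> integral f a b = RInt f a b.
Proof.
  intros Hf. unfold integral.
  destruct (epsilon_spec (inhabits 0)
              (fun I => exists pr : Riemann_integrable f a b, RiemannInt pr = I))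
    as [pr <-].
  - eexists. exists (ex_RInt_Reals_0 _ _ _ Hf). reflexivity.
  - rewrite <- RInt_Reals. reflexivity.
Qed.

Lemma ex_RInt_continuity f a b : continuity f -> ex_RInt f a b.
Proof.
  intros Hf. apply (@ex_RInt_continuous R_CompleteNormedModule).
  intros z _. apply continuity_pt_filterlim, Hf.
Qed.

Ltac solve_ex_RInt := apply ex_RInt_continuity; solve_continuity.

Lemma continuity_RInt f a : continuity f -> continuity (fun t => RInt f a t).
Proof.
  intros Hf x. apply continuity_pt_filterlim, (continuous_RInt_1 f a x).
  apply filter_forall. intros y.
  apply (@RInt_correct R_CompleteNormedModule), ex_RInt_continuity, Hf.
Qed.

Lemma RInt_reflect f c a b : continuity f ->
  RInt (fun y => f (c - y)) a b = RInt f (c - b) (c - a) :> R.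
Proof.
  intros Hf.
  pose proof (RInt_comp_lin f (-1) c a b (ex_RInt_continuity _ _ _ Hf)) as Hlin.
  replace (-1 * a + c) with (c - a) in Hlin by ring.
  replace (-1 * b + c) with (c - b) in Hlin by ring.
  rewrite <- (opp_RInt_swap f (c - a) (c - b)) by apply ex_RInt_continuity, Hf.
  rewrite <- Hlin, <- RInt_opp.
  - apply RInt_ext. intros x _. cbn. unfold scal; cbn; unfold mult; cbn.
    replace (-1 * x + c) with (c - x) by ring. ring.
  - apply (ex_RInt_comp_lin f (-1) c a b), ex_RInt_continuity, Hf.
Qed.

(* Coquelicot's lemmas are stated in a normed module, with [plus], [opp] and [scal];
   these instances state them over R, with [:> R] so that [ring] and [lra] apply. *)
Lemma RInt_Chasles_R (f : R -> R) a b c : ex_RInt f a b -> ex_RInt f b c ->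
  RInt f a b + RInt f b c = RInt f a c.
Proof. exact (RInt_Chasles f a b c). Qed.

Lemma RInt_swap_R (f : R -> R) a b : ex_RInt f a b -> RInt f b a = - RInt f a b :> R.
Proof. intros Hf. symmetry. exact (opp_RInt_swap f a b Hf). Qed.

Lemma RInt_plus_R (f g : R -> R) a b : ex_RInt f a b -> ex_RInt g a b ->
  RInt (fun x => f x + g x) a b = RInt f a b + RInt g a b :> R.
Proof. exact (RInt_plus f g a b). Qed.

Lemma RInt_scal_R (f : R -> R) a b l : ex_RInt f a b ->
  RInt (fun x => l * f x) a b = l * RInt f a b :> R.
Proof. exact (RInt_scal f a b l). Qed.

Lemma RInt_const_R a b c : RInt (fun _ => c) a b = c * (b - a) :> R.
Proof. rewrite RInt_const. unfold scal; cbn; unfold mult; cbn. ring. Qed.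

Definition reflects (c e a b : R) (f : R -> R) : Prop :=
  forall t, a <= t <= b -> f (c - t) = e * f t.

Lemma reflects_between c e a b f x y : reflects c e a b f ->
  a <= x <= b -> a <= y <= b -> reflects c e (Rmin x y) (Rmax x y) f.
Proof.
  intros Hf Hx Hy t Ht. apply Hf. unfold Rmin, Rmax in Ht. destruct Rle_dec; lra.
Qed.

Lemma RInt_reflects f c e a b : continuity f -> reflects c e (Rmin a b) (Rmax a b) f ->
  RInt f (c - b) (c - a) = e * RInt f a b :> R.
Proof.
  intros Hc Hf. rewrite <- RInt_reflect, <- RInt_scal_R by (exact Hc || apply ex_RInt_continuity, Hc).
  apply RInt_ext. intros t Ht. apply Hf. lra.
Qed.

Lemma RInt_reflects_odd f a b : continuity f -> a <= b -> reflects (a + b) (-1) a b f ->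
  RInt f a b = 0 :> R.
Proof.
  intros Hc Hab Hf.
  pose proof (RInt_reflects f (a + b) (-1) a b Hc) as H.
  rewrite Rmin_left, Rmax_right in H by exact Hab.
  replace (a + b - b) with a in H by ring. replace (a + b - a) with b in H by ring.
  specialize (H Hf). lra.
Qed.

Lemma reflects_plus c e a b f g : reflects c e a b f -> reflects c e a b g ->
  reflects c e a b (fun t => f t + g t).
Proof. intros Hf Hg t Ht. rewrite Hf, Hg by exact Ht. ring. Qed.

Lemma reflects_opp c e a b f : reflects c e a b f -> reflects c e a b (fun t => - f t).
Proof. intros Hf t Ht. rewrite Hf by exact Ht. ring. Qed.

Lemma reflects_scal c e a b f l : reflects c e a b f -> reflects c e a b (fun t => f t * l).
Proof. intros Hf t Ht. rewrite Hf by exact Ht. ring. Qed.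

Lemma reflects_mult c e e' a b f g : reflects c e a b f -> reflects c e' a b g ->
  reflects c (e * e') a b (fun t => f t * g t).
Proof. intros Hf Hg t Ht. rewrite Hf, Hg by exact Ht. ring. Qed.

Definition pwm_parity (e : R) (f : R -> R) : Prop :=
  reflects 1 e 0 1 f /\ reflects (1/2) (- e) 0 (1/2) f.

Lemma pwm_parity_plus e f g : pwm_parity e f -> pwm_parity e g ->
  pwm_parity e (fun t => f t + g t).
Proof. intros [Hf1 Hf2] [Hg1 Hg2]. split; apply reflects_plus; assumption. Qed.

Lemma pwm_parity_minus e f g : pwm_parity e f -> pwm_parity e g ->
  pwm_parity e (fun t => f t - g t).
Proof.
  intros Hf [Hg1 Hg2]. apply pwm_parity_plus; [exact Hf | split; apply reflects_opp; assumption].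
Qed.

Lemma pwm_parity_scal e f l : pwm_parity e f -> pwm_parity e (fun t => f t * l).
Proof. intros [Hf1 Hf2]. split; apply reflects_scal; assumption. Qed.

Lemma pwm_parity_ext e f g : (forall t, f t = g t) -> pwm_parity e f -> pwm_parity e g.
Proof. intros E [Hf1 Hf2]. split; intros t Ht; rewrite <- !E; auto. Qed.

Lemma RInt_pwm_parity f e : continuity f -> pwm_parity e f -> RInt f 0 1 = 0 :> R.
Proof.
  intros Hc [H1 H2].
  pose proof (RInt_reflects f 1 e 0 (1/2) Hc) as Hright.
  pose proof (RInt_reflects f (1/2) (- e) 0 (1/2) Hc) as Hleft.
  rewrite Rmin_left, Rmax_right in Hright, Hleft by lra.
  replace (1 - 1/2) with (1/2) in Hright by lra. replace (1 - 0) with 1 in Hright by lra.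
  replace (1/2 - 1/2) with 0 in Hleft by lra. replace (1/2 - 0) with (1/2) in Hleft by lra.
  specialize (Hright ltac:(intros t Ht; apply H1; lra)).
  specialize (Hleft ltac:(intros t Ht; apply H2; lra)).
  rewrite <- (RInt_Chasles_R f 0 (1/2) 1), Hright by apply ex_RInt_continuity, Hc.
  lra.
Qed.

Lemma L2inner_RInt f g : continuity f -> continuity g ->
  L2inner f g = RInt (fun s => f s * g s) 0 1 :> R.
Proof. intros Hf Hg. apply integral_RInt. solve_ex_RInt. Qed.

Lemma L2inner_pwm_parity_opp e f g : e * e = 1 -> continuity f -> continuity g ->
  pwm_parity e f -> pwm_parity (- e) g -> L2inner f g = 0.
Proof.
  intros He Hf Hg [Hf1 _] [Hg1 _]. rewrite L2inner_RInt by assumption.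
  apply RInt_reflects_odd; [solve_continuity | lra |].
  replace (0 + 1) with 1 by ring. replace (-1) with (e * - e) by lra.
  apply reflects_mult; assumption.
Qed.

Lemma pwm_parity_antiderivative p e : continuity p -> pwm_parity e p ->
  pwm_parity (- e) (fun t => RInt p (1/2) t - RInt p (1/2) 0 / 2).
Proof.
  intros Hc [H1 H2].
  assert (Hex : forall a b, ex_RInt p a b) by (intros; apply ex_RInt_continuity, Hc).
  assert (HP1 : forall t, 0 <= t <= 1 -> RInt p (1/2) (1 - t) = - e * RInt p (1/2) t :> R).
  { intros t Ht.
    pose proof (RInt_reflects p 1 e t (1/2) Hc) as H.
    replace (1 - 1/2) with (1/2) in H by lra.
    rewrite H, (RInt_swap_R p t) by
      (apply Hex || apply reflects_between with 0 1; lra || assumption).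
    ring. }
  assert (HP2 : forall t, 0 <= t <= 1/2 ->
            RInt p (1/2) (1/2 - t) = RInt p (1/2) 0 + e * RInt p (1/2) t :> R).
  { intros t Ht.
    pose proof (RInt_reflects p (1/2) (- e) t (1/2) Hc) as H.
    replace (1/2 - 1/2) with 0 in H by lra.
    rewrite <- (RInt_Chasles_R p (1/2) 0), H, (RInt_swap_R p t) by
      (apply Hex || apply reflects_between with 0 (1/2); lra || assumption).
    ring. }
  (* with P = RInt p (1/2), this lets the single shift P(0)/2 fit both reflections *)
  assert (Hhalf : (1 + e) * RInt p (1/2) 0 = 0).
  { pose proof (RInt_reflects p (1/2) (- e) 0 (1/2) Hc) as H.
    rewrite Rmin_left, Rmax_right in H by lra.
    replace (1/2 - 1/2) with 0 in H by lra. replace (1/2 - 0) with (1/2) in H by lra.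
    rewrite (RInt_swap_R p 0) by apply Hex.
    specialize (H H2). lra. }
  split; intros t Ht.
  - rewrite HP1 by exact Ht. lra.
  - rewrite HP2 by exact Ht. lra.
Qed.

Definition lincomb (coef : (R -> R) -> R) (L : list (R -> R)) (t : R) : R :=
  fold_right (fun f acc => acc + f t * coef f) 0 L.

Lemma lincomb_closed (Q : (R -> R) -> Prop) coef L :
  Q (fun _ => 0) -> (forall f g, Q f -> Q g -> Q (fun t => f t + g t)) ->
  (forall f, In f L -> Q (fun t => f t * coef f)) -> Q (lincomb coef L).
Proof.
  intros H0 Hplus. induction L as [|f L IH]; intros HL; [exact H0|].
  apply (Hplus (lincomb coef L) (fun t => f t * coef f)).
  - apply IH. intros g Hg. apply HL. right. exact Hg.
  - apply HL. left. reflexivity.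
Qed.

Lemma continuity_lincomb coef L : (forall f, In f L -> continuity f) ->
  continuity (lincomb coef L).
Proof.
  intros HL. apply lincomb_closed.
  - solve_continuity.
  - intros f g Hf Hg. solve_continuity.
  - intros f Hf. specialize (HL f Hf). solve_continuity.
Qed.

Section GramSchmidtStep.

Variables (e c : R) (P : R -> R) (L : list (R -> R)).
Hypothesis He : e * e = 1.
Hypothesis HPcont : continuity P.
Hypothesis HPpar : pwm_parity e P.
Hypothesis HL : forall f, In f L ->
  continuity f /\ (pwm_parity e f \/ pwm_parity (- e) f).

Lemma L2inner_p0_shift : L2inner pwm_p0 (fun t => c + P t) = c.
Proof.
  rewrite L2inner_RInt by (unfold pwm_p0; solve_continuity).
  unfold pwm_p0. rewrite (RInt_ext _ (fun s => c + P s)) by (intros; lra).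
  rewrite RInt_plus_R, RInt_const_R, (RInt_pwm_parity P e) by (solve_ex_RInt || assumption).
  ring.
Qed.

Lemma L2inner_shift f : In f L -> L2inner f (fun t => c + P t) = L2inner f P.
Proof.
  intros Hf. destruct (HL f Hf) as [Hc Hpar].
  assert (Hmean : RInt f 0 1 = 0 :> R) by
    (destruct Hpar; eapply RInt_pwm_parity; eassumption).
  rewrite !L2inner_RInt by solve_continuity.
  rewrite (RInt_ext _ (fun s => c * f s + f s * P s)) by (intros; lra).
  rewrite RInt_plus_R, RInt_scal_R, Hmean by solve_ex_RInt. ring.
Qed.

Lemma pwm_parity_residual :
  pwm_parity e (fun t =>
    c + P t - lincomb (fun f => L2inner f (fun s => c + P s)) (pwm_p0 :: L) t).
Proof.
  apply (pwm_parity_ext e (fun t => P t - lincomb (fun f => L2inner f (fun s => c + P s)) L t)).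
  { intros t. cbn [lincomb fold_right]. fold (lincomb (fun f => L2inner f (fun s => c + P s)) L t).
    rewrite L2inner_p0_shift. unfold pwm_p0. ring. }
  apply pwm_parity_minus; [exact HPpar|].
  apply lincomb_closed.
  - split; intros t _; ring.
  - apply pwm_parity_plus.
  - intros f Hf. rewrite L2inner_shift by exact Hf.
    destruct (HL f Hf) as [Hc [Hpar | Hpar]].
    + apply pwm_parity_scal, Hpar.
    + rewrite (L2inner_pwm_parity_opp (- e) f P) by (rewrite ?Ropp_involutive; lra || assumption).
      split; intros t _; ring.
Qed.

End GramSchmidtStep.

Lemma pwm_next_parity e p L : e * e = 1 ->
  (forall f, In f L -> continuity f /\ (pwm_parity e f \/ pwm_parity (- e) f)) ->
  last (pwm_p0 :: L) pwm_p0 = p -> continuity p -> pwm_parity (- e) p ->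
  continuity (pwm_next (1/2) (pwm_p0 :: L)) /\ pwm_parity e (pwm_next (1/2) (pwm_p0 :: L)).
Proof.
  intros He HL Hlast Hpc Hpp.
  set (c := RInt p (1/2) 0 / 2).
  set (P := fun t => RInt p (1/2) t - c).
  assert (HPc : continuity P).
  { unfold P. apply continuity_minus; [apply continuity_RInt, Hpc | solve_continuity]. }
  assert (HPp : pwm_parity e P).
  { rewrite <- (Ropp_involutive e). apply pwm_parity_antiderivative; assumption. }
  assert (Hstar : (fun t => integral (last (pwm_p0 :: L) pwm_p0) (1/2) t) = (fun t => c + P t)).
  { apply functional_extensionality. intros t.
    rewrite Hlast, integral_RInt by apply ex_RInt_continuity, Hpc.
    unfold P. lra. }
  assert (Hnext : exists Z, pwm_next (1/2) (pwm_p0 :: L) = fun t =>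
    (c + P t - lincomb (fun f => L2inner f (fun s => c + P s)) (pwm_p0 :: L) t) / Z).
  { eexists. apply functional_extensionality. intros t.
    unfold pwm_next. cbv zeta. rewrite Hstar. rewrite (equal_f Hstar t). reflexivity. }
  destruct Hnext as [Z ->]. unfold Rdiv. split.
  - assert (continuity (lincomb (fun f => L2inner f (fun s => c + P s)) (pwm_p0 :: L))).
    { apply continuity_lincomb. intros f [<- | Hf]; [unfold pwm_p0; solve_continuity | apply HL, Hf]. }
    solve_continuity.
  - apply pwm_parity_scal, pwm_parity_residual; assumption.
Qed.

Lemma pwm_list_length D n : length (pwm_list D n) = S n.
Proof.
  assert (H : forall m, length (pwm_list D m) = S m /\ length (pwm_list D (S m)) = S (S m)).
  { induction m as [|m [_ IH]]; [split; reflexivity|]. split; [exact IH|].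
    change (pwm_list D (S (S m))) with (pwm_list D (S m) ++ [pwm_next D (pwm_list D (S m))]).
    rewrite length_app, IH. cbn. lia. }
  apply H.
Qed.

Lemma pwm_succ_succ D n : pwm D (S (S n)) = pwm_next D (pwm_list D (S n)).
Proof.
  unfold pwm at 1.
  change (pwm_list D (S (S n))) with (pwm_list D (S n) ++ [pwm_next D (pwm_list D (S n))]).
  rewrite app_nth2; rewrite pwm_list_length; [rewrite Nat.sub_diag; reflexivity | lia].
Qed.

Lemma pwm_list_seq D n : pwm_list D n = map (pwm D) (seq 0 (S n)).
Proof.
  induction n as [|[|n] IH]; [reflexivity | reflexivity |].
  change (pwm_list D (S (S n))) with (pwm_list D (S n) ++ [pwm_next D (pwm_list D (S n))]).
  rewrite (seq_S (S (S n))), map_app, <- IH, <- pwm_succ_succ. reflexivity.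
Qed.

Lemma pwm_list_cons D n :
  pwm_list D n = pwm_p0 :: map (fun j => pwm D (S j)) (seq 0 n).
Proof. rewrite pwm_list_seq. cbn [seq map]. rewrite <- seq_shift, map_map. reflexivity. Qed.

Lemma pwm_list_last D n : last (pwm_list D (S n)) pwm_p0 = pwm D (S n).
Proof. rewrite pwm_list_seq, seq_S, map_app. apply last_last. Qed.

Lemma pwm_p1_half t : pwm_p1 (1/2) t = sqrt 3 * (1 - 4 * Rabs (t - 1/2)).
Proof.
  unfold pwm_p1. destruct Rle_dec.
  - rewrite Rabs_left1 by lra. field.
  - rewrite Rabs_right by lra. field.
Qed.

Lemma pwm_p1_half_parity : continuity (pwm_p1 (1/2)) /\ pwm_parity 1 (pwm_p1 (1/2)).
Proof.
  split.
  - replace (pwm_p1 (1/2)) with (fun t => sqrt 3 * (1 - 4 * Rabs (t - 1/2)))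
      by (apply functional_extensionality; intros t; symmetry; apply pwm_p1_half).
    assert (continuity (fun t => Rabs (t - 1/2))).
    { apply (continuity_comp (fun t => t - 1/2) Rabs); [solve_continuity | apply Rcontinuity_abs]. }
    solve_continuity.
  - split; intros t Ht; rewrite !pwm_p1_half.
    + replace (1 - t - 1/2) with (- (t - 1/2)) by lra. rewrite Rabs_Ropp. ring.
    + rewrite (Rabs_left1 (t - 1/2)), (Rabs_left1 (1/2 - t - 1/2)) by lra. lra.
Qed.

Lemma pow_neg1_cases j : (-1) ^ j = 1 \/ (-1) ^ j = -1.
Proof.
  induction j as [|j [IH | IH]]; cbn [pow]; [left | right | left]; rewrite ?IH; ring.
Qed.

Lemma pwm_half_parity k :
  continuity (pwm (1/2) (S k)) /\ pwm_parity ((-1) ^ k) (pwm (1/2) (S k)).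
Proof.
  induction k as [[|m] IH] using (well_founded_induction Nat.lt_wf_0).
  { exact pwm_p1_half_parity. }
  set (e := (-1) ^ S m).
  assert (He : e = 1 \/ e = -1) by apply pow_neg1_cases.
  destruct (IH m ltac:(lia)) as [Hpc Hpp].
  rewrite pwm_succ_succ, pwm_list_cons.
  apply pwm_next_parity with (pwm (1/2) (S m)).
  - destruct He as [-> | ->]; ring.
  - intros f Hf. apply in_map_iff in Hf as [j [<- Hj]]. apply in_seq in Hj.
    destruct (IH j ltac:(lia)) as [Hjc Hjp]. split; [exact Hjc|].
    destruct (Req_dec ((-1) ^ j) e) as [<- | Hne]; [left; exact Hjp | right].
    replace (- e) with ((-1) ^ j); [exact Hjp|].
    destruct (pow_neg1_cases j), He; lra.
  - rewrite <- pwm_list_cons. apply pwm_list_last.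
  - exact Hpc.
  - replace (- e) with ((-1) ^ m); [exact Hpp | unfold e; cbn [pow]; ring].
Qed.

(* The inner product with the square wave equal to 1, -1, 1, -1 on the quarters of [0,1]. *)
Definition alternating_quarters (f : R -> R) : R :=
  RInt f 0 (1/4) - RInt f (1/4) (1/2) + RInt f (1/2) (3/4) - RInt f (3/4) 1.

Lemma alternating_quarters_pwm_parity e f : e * e = 1 -> continuity f -> pwm_parity e f ->
  alternating_quarters f = 0.
Proof.
  intros He Hc [H1 H2]. unfold alternating_quarters.
  pose proof (RInt_reflects f 1 e 0 (1/4) Hc) as Q4.
  pose proof (RInt_reflects f 1 e (1/4) (1/2) Hc) as Q3.
  pose proof (RInt_reflects f (1/2) (- e) 0 (1/4) Hc) as Q2.
  rewrite Rmin_left, Rmax_right in Q4, Q3, Q2 by lra.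
  replace (1 - 1/4) with (3/4) in Q4, Q3 by lra. replace (1 - 0) with 1 in Q4 by lra.
  replace (1 - 1/2) with (1/2) in Q3 by lra.
  replace (1/2 - 1/4) with (1/4) in Q2 by lra. replace (1/2 - 0) with (1/2) in Q2 by lra.
  rewrite Q4, Q3, Q2 by (intros t Ht; (apply H1 || apply H2); lra).
  replace (e * (- e * RInt f 0 (1/4))) with (- (e * e) * RInt f 0 (1/4)) by ring.
  rewrite He. ring.
Qed.

Lemma alternating_quarters_plus f g : continuity f -> continuity g ->
  alternating_quarters (fun t => f t + g t) = alternating_quarters f + alternating_quarters g.
Proof. intros Hf Hg. unfold alternating_quarters. rewrite !RInt_plus_R by solve_ex_RInt. ring. Qed.

Lemma alternating_quarters_scal f l : continuity f ->
  alternating_quarters (fun t => l * f t) = l * alternating_quarters f.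
Proof. intros Hf. unfold alternating_quarters. rewrite !RInt_scal_R by solve_ex_RInt. ring. Qed.

Lemma alternating_quarters_const c : alternating_quarters (fun _ => c) = 0.
Proof. unfold alternating_quarters. rewrite !RInt_const_R. lra. Qed.

Lemma pwm_half_continuity_quarters k :
  continuity (pwm (1/2) k) /\ alternating_quarters (pwm (1/2) k) = 0.
Proof.
  destruct k as [|k].
  - change (pwm (1/2) 0) with pwm_p0. unfold pwm_p0.
    split; [solve_continuity | apply alternating_quarters_const].
  - destruct (pwm_half_parity k) as [Hc Hp]. split; [exact Hc|].
    apply (alternating_quarters_pwm_parity ((-1) ^ k)); [| exact Hc | exact Hp].
    destruct (pow_neg1_cases k) as [-> | ->]; ring.
Qed.

Lemma pwm_comb_continuity_quarters N a :
  continuity (pwm_comb (1/2) N a) /\ alternating_quarters (pwm_comb (1/2) N a) = 0.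
Proof.
  induction N as [|N [IHc IHq]].
  - destruct (pwm_half_continuity_quarters 0) as [Hc0 Hq0].
    change (pwm_comb (1/2) 0 a) with (fun t => a 0%nat * pwm (1/2) 0 t).
    split; [solve_continuity | rewrite alternating_quarters_scal, Hq0 by exact Hc0; ring].
  - destruct (pwm_half_continuity_quarters (S N)) as [HcS HqS].
    change (pwm_comb (1/2) (S N) a)
      with (fun t => pwm_comb (1/2) N a t + a (S N) * pwm (1/2) (S N) t).
    split; [solve_continuity|].
    rewrite alternating_quarters_plus, alternating_quarters_scal, IHq, HqS by solve_continuity.
    ring.
Qed.

Lemma RInt_ext_open (f g : R -> R) a b : a <= b -> continuity g ->
  (forall x, a < x < b -> f x = g x) -> ex_RInt f a b /\ RInt f a b = RInt g a b :> R.
Proof.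
  intros Hab Hg E.
  assert (E' : forall x, Rmin a b < x < Rmax a b -> g x = f x).
  { rewrite Rmin_left, Rmax_right by exact Hab. intros x Hx. symmetry. apply E, Hx. }
  split.
  - apply (ex_RInt_ext g f a b E'), ex_RInt_continuity, Hg.
  - symmetry. apply RInt_ext, E'.
Qed.

Lemma RInt_quarters (f : R -> R) :
  ex_RInt f 0 (1/4) -> ex_RInt f (1/4) (1/2) -> ex_RInt f (1/2) (3/4) -> ex_RInt f (3/4) 1 ->
  ex_RInt f 0 1 /\
  RInt f 0 1 = RInt f 0 (1/4) + RInt f (1/4) (1/2) + RInt f (1/2) (3/4) + RInt f (3/4) 1 :> R.
Proof.
  intros X1 X2 X3 X4.
  pose proof (ex_RInt_Chasles f _ _ _ X1 X2) as X12.
  pose proof (ex_RInt_Chasles f _ _ _ X3 X4) as X34.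
  split; [exact (ex_RInt_Chasles f _ _ _ X12 X34)|].
  rewrite <- (RInt_Chasles_R f 0 (1/2) 1 X12 X34), <- (RInt_Chasles_R f 0 (1/4) (1/2) X1 X2),
    <- (RInt_Chasles_R f (1/2) (3/4) 1 X3 X4).
  ring.
Qed.

Lemma gtest_q1 x : x < 1/4 -> gtest x = 1.
Proof. intros; unfold gtest; destruct Rlt_dec; lra. Qed.

Lemma gtest_q23 x : 1/4 <= x < 3/4 -> gtest x = 0.
Proof. intros; unfold gtest; destruct Rlt_dec; [|destruct Rlt_dec]; lra. Qed.

Lemma gtest_q4 x : 3/4 <= x -> gtest x = -1.
Proof. intros; unfold gtest; destruct Rlt_dec; [|destruct Rlt_dec]; lra. Qed.

Lemma L2inner_gtest_even f : continuity f -> reflects 1 1 0 1 f -> L2inner f gtest = 0.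
Proof.
  intros Hc Hf. unfold L2inner.
  destruct (RInt_ext_open (fun s => f s * gtest s) f 0 (1/4)) as [X1 R1];
    [lra | exact Hc | intros x Hx; rewrite gtest_q1 by lra; ring |].
  destruct (RInt_ext_open (fun s => f s * gtest s) (fun _ => 0) (1/4) (1/2)) as [X2 R2];
    [lra | solve_continuity | intros x Hx; rewrite gtest_q23 by lra; ring |].
  destruct (RInt_ext_open (fun s => f s * gtest s) (fun _ => 0) (1/2) (3/4)) as [X3 R3];
    [lra | solve_continuity | intros x Hx; rewrite gtest_q23 by lra; ring |].
  destruct (RInt_ext_open (fun s => f s * gtest s) (fun s => -1 * f s) (3/4) 1) as [X4 R4];
    [lra | solve_continuity | intros x Hx; rewrite gtest_q4 by lra; ring |].
  destruct (RInt_quarters _ X1 X2 X3 X4) as [X RQ].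
  rewrite integral_RInt, RQ, R1, R2, R3, R4, !RInt_const_R, RInt_scal_R
    by (exact X || apply ex_RInt_continuity, Hc).
  pose proof (RInt_reflects f 1 1 0 (1/4) Hc) as Hsym.
  rewrite Rmin_left, Rmax_right in Hsym by lra.
  replace (1 - 1/4) with (3/4) in Hsym by lra. replace (1 - 0) with 1 in Hsym by lra.
  rewrite Hsym by (intros t Ht; apply Hf; lra). ring.
Qed.

Lemma RInt_square_ge (f : R -> R) y e a b : continuity f -> a <= b -> e * e = 1 ->
  RInt (fun t => (y - f t) ^ 2) a b >= - e * RInt f a b + (e * y - 1/4) * (b - a).
Proof.
  intros Hc Hab He.
  rewrite <- RInt_const_R, <- RInt_scal_R, <- RInt_plus_R by solve_ex_RInt.
  apply Rle_ge, RInt_le; [exact Hab | solve_ex_RInt | cbn [pow]; solve_ex_RInt |].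
  intros x _. pose proof (pow2_ge_0 (y - f x - e / 2)). nra.
Qed.

Lemma RInt_sq_dist_gtest_ge S u : continuity S -> alternating_quarters S = 0 ->
  (forall t, 0 <= t <= 1 -> u t = gtest t - S t) ->
  ex_RInt (fun t => u t ^ 2) 0 1 /\ RInt (fun t => u t ^ 2) 0 1 >= 1/4.
Proof.
  intros Hc HS Hu.
  assert (Hsq : forall y, continuity (fun t => (y - S t) ^ 2))
    by (intros y; cbn [pow]; solve_continuity).
  destruct (RInt_ext_open (fun t => u t ^ 2) (fun t => (1 - S t) ^ 2) 0 (1/4)) as [X1 R1];
    [lra | apply Hsq | intros x Hx; rewrite Hu, gtest_q1 by lra; reflexivity |].
  destruct (RInt_ext_open (fun t => u t ^ 2) (fun t => (0 - S t) ^ 2) (1/4) (1/2)) as [X2 R2];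
    [lra | apply Hsq | intros x Hx; rewrite Hu, gtest_q23 by lra; reflexivity |].
  destruct (RInt_ext_open (fun t => u t ^ 2) (fun t => (0 - S t) ^ 2) (1/2) (3/4)) as [X3 R3];
    [lra | apply Hsq | intros x Hx; rewrite Hu, gtest_q23 by lra; reflexivity |].
  destruct (RInt_ext_open (fun t => u t ^ 2) (fun t => (-1 - S t) ^ 2) (3/4) 1) as [X4 R4];
    [lra | apply Hsq | intros x Hx; rewrite Hu, gtest_q4 by lra; reflexivity |].
  destruct (RInt_quarters _ X1 X2 X3 X4) as [X RQ].
  split; [exact X|].
  (* pair (g - S)^2 >= e (g - S) - 1/4 with the signs e = 1, -1, 1, -1 of the four quarters *)
  pose proof (RInt_square_ge S 1 1 0 (1/4) Hc ltac:(lra) ltac:(lra)).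
  pose proof (RInt_square_ge S 0 (-1) (1/4) (1/2) Hc ltac:(lra) ltac:(lra)).
  pose proof (RInt_square_ge S 0 1 (1/2) (3/4) Hc ltac:(lra) ltac:(lra)).
  pose proof (RInt_square_ge S (-1) (-1) (3/4) 1 Hc ltac:(lra) ltac:(lra)).
  unfold alternating_quarters in HS. rewrite RQ, R1, R2, R3, R4. lra.
Qed.

Lemma L2norm_dist_gtest_ge S u : continuity S -> alternating_quarters S = 0 ->
  (forall t, 0 <= t <= 1 -> u t = gtest t - S t) -> L2norm u >= 1/2.
Proof.
  intros Hc HS Hu. destruct (RInt_sq_dist_gtest_ge S u Hc HS Hu) as [X B].
  unfold L2norm. rewrite integral_RInt by exact X.
  rewrite <- (sqrt_square (1/2)) by lra.
  apply Rle_ge, sqrt_le_1_alt. lra.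
Qed.

Theorem mainTheorem5 :
  (* (i) *)
  (L2inner (pwm (1/2) 0) gtest = 0 /\
   forall k : nat, Nat.Odd k -> L2inner (pwm (1/2) k) gtest = 0) /\
  (* (ii) *)
  (exists c : R, c > 0 /\
     forall (Np : nat) (gh : R -> R),
       is_L2_projection (1/2) Np gtest gh ->
       L2norm (fun t => gtest t - gh t) >= c) /\
  (* in particular: the span of the p_k is not dense in L^2([0,1]) *)
  (exists f : R -> R, inhabited (Riemann_integrable (fun t => f t ^ 2) 0 1) /\
     exists eps : R, eps > 0 /\
       forall (N : nat) (a : nat -> R),
         L2norm (fun t => f t - pwm_comb (1/2) N a t) >= eps).
Proof.
  split; [split | split].
  - change (pwm (1/2) 0) with pwm_p0. unfold pwm_p0.
    apply L2inner_gtest_even; [solve_continuity | intros t _; ring].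
  - intros k [j ->]. rewrite Nat.add_1_r.
    destruct (pwm_half_parity (2 * j)) as [Hc [Hsym _]].
    rewrite pow_1_even in Hsym. apply L2inner_gtest_even; assumption.
  - exists (1/2). split; [lra|]. intros Np gh [[a Ha] _].
    destruct (pwm_comb_continuity_quarters Np a) as [Hc HS].
    apply (L2norm_dist_gtest_ge _ _ Hc HS). intros t Ht. rewrite Ha by exact Ht. reflexivity.
  - exists gtest. split.
    + destruct (RInt_sq_dist_gtest_ge (fun _ => 0) gtest) as [X _];
        [solve_continuity | apply alternating_quarters_const | intros; ring |].
      constructor. exact (ex_RInt_Reals_0 _ _ _ X).
    + exists (1/2). split; [lra|]. intros N a.
      destruct (pwm_comb_continuity_quarters N a) as [Hc HS].
      exact (L2norm_dist_gtest_ge _ _ Hc HS (fun t _ => eq_refl)).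
Qed.
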